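(* Let $\mathcal S$ be a signed group and let $\mathbf e=(e_1,e_2,\dots)$ be a basic sequence in $\mathcal S$ (finite or countably infinite). Let $C=[c_{jk}]$ with $c_{jk}=c(e_j,e_k)$ be its AC-matrix (so $c_{jj}=1$) and let $D=[d_{jk}]$, $d_{jk}=(1-c_{jk})/2\in\{0,1\}$. Then for all finitary $0$-$1$ sequences $\mathbf p,\mathbf q$, \[ \mathbf e^{\mathbf p}\,\mathbf e^{\mathbf q}=(-1)^{\sum_{j\ge1}\sum_{k>j} d_{jk}\,p_k\,q_j}\;\mathbf e^{\mathbf p+\mathbf q}, \qquad \mathbf e^{\mathbf p+\mathbf q}:=\prod_{n} e_n^{p_n+q_n}\ \text{(ordered by increasing $n$)} . \] Moreover, writing $\langle\mathbf p\rangle=\sum_n p_n$ and $\mathbf p\mathbf q=(p_nq_n)$: (1) $\mathbf e^{\mathbf p}\circ\mathbf e^{\mathbf q}=(-1)^{(\langle C\mathbf p,\mathbf q\rangle-\langle\mathbf p\rangle\langle\mathbf q\rangle)/2}$; (2) if $\mathbf e$ is anticommutative, $\mathbf e^{\mathbf p}\circ\mathbf e^{\mathbf q}=(-1)^{\langle\mathbf p\rangle\langle\mathbf q\rangle-\langle\mathbf p\mathbf q\rangle}$; (3) if $\mathcal G\subset\mathcal S$ is a subgroup generated by a basic sequence of length at least $2$ such that any two elements of $\mathcal G\setminus\{\pm1\}$ that are not equal up to sign anticommute, then the generating sequence has length exactly $2$, i.e. $\mathcal G$ has order $8$; (4) if $\mathbf e$ is anticommutative and $p=\langle\mathbf p\rangle$,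 then the signature of $\mathbf e^{\mathbf p}$ is $(\mathbf e^{\mathbf p})^2=\big(\prod_n e_n^{2p_n}\big)(-1)^{p(p-1)/2}$; in particular, if $\mathbf e$ is positive then $\mathbf e^{\mathbf p}$ is negative iff $p\equiv 2$ or $p\equiv 3 \pmod 4$, and if $\mathbf e$ is negative then $\mathbf e^{\mathbf p}$ is negative iff $p\equiv 2$ or $p\equiv1\pmod 4$; (5) for an anticommutative $\mathbf e$ of length $n$, let $s_+$ (resp. $s_-$) denote the number of negative elements among $\{\mathbf e^{\mathbf p}:\mathbf p\in\{0,1\}^n\}$ when $\mathbf e$ is positive (resp. negative). Then $s_+=b_2+b_3$ and $s_-=b_1+b_2$, where $b_q=\sum_{j\ge0,\ q+4j\le n}\binom{n}{q+4j}$.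
   Context: A signed group is a group $\mathcal S$ containing a central element $-1\neq1$ with $(-1)^2=1$ such that any two elements $e,f$ either commute ($ef=fe$) or anticommute ($ef=-fe$), and every element $e$ has signature $e^2\in\{1,-1\}$; $e$ is positive if $e^2=1$ and negative if $e^2=-1$, and a sequence is positive/negative (pure) if all its elements are. The commutativity function is $c(e,f)=e\circ f=1$ if $ef=fe$ and $-1$ if $ef=-fe$. For a sequence $\mathbf e=(e_n)$ and a finitary $0$-$1$ sequence $\mathbf p$ (i.e. $p_n\in\{0,1\}$, $p_n=0$ eventually), $\mathbf e^{\mathbf p}=e_1^{p_1}e_2^{p_2}\cdots$ with $e^0=1$, $e^1=e$. A sequence is basic if no $\mathbf e^{\mathbf p}$ with $\mathbf p\neq\mathbf 0$ equals $\pm1$. A sequence is anticommutative if any two distinct terms anticommute. *)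

From HB Require Import structures.
From mathcomp Require Import all_boot all_algebra.
From Stdlib Require Import ClassicalEpsilon.
From Stdlib Require Lists.List.
Set Implicit Arguments. Unset Strict Implicit. Unset Printing Implicit Defensive.
Import GRing.Theory Num.Theory.
Local Open Scope ring_scope.

Record signed_group := SignedGroup {
  sg_car :> Type;
  sg_mul : sg_car -> sg_car -> sg_car;
  sg_one : sg_car;
  sg_inv : sg_car -> sg_car;
  sg_m1 : sg_car;
  sg_mulA : forall x y z, sg_mul x (sg_mul y z) = sg_mul (sg_mul x y) z;
  sg_mul1x : forall x, sg_mul sg_one x = x;
  sg_mulx1 : forall x, sg_mul x sg_one = x;
  sg_mulVx : forall x, sg_mul (sg_inv x) x = sg_one;
  sg_mulxV : forall x, sg_mul x (sg_inv x) = sg_one;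
  sg_m1_neq1 : sg_m1 <> sg_one;
  sg_m1_sq : sg_mul sg_m1 sg_m1 = sg_one;
  sg_m1_central : forall x, sg_mul sg_m1 x = sg_mul x sg_m1;
  sg_comm_or_anti : forall x y,
    sg_mul x y = sg_mul y x \/ sg_mul x y = sg_mul sg_m1 (sg_mul y x);
  sg_signature : forall x, sg_mul x x = sg_one \/ sg_mul x x = sg_m1
}.

Arguments sg_mul {s}. Arguments sg_one {s}. Arguments sg_inv {s}. Arguments sg_m1 {s}.

(* Commutativity function c(x,y) = x o y in {1,-1} (as an integer). *)
Definition cfun (S : signed_group) (x y : S) : int :=
  if excluded_middle_informative (sg_mul x y = sg_mul y x) then 1 else -1.

Definition dfun (S : signed_group) (x y : S) : nat :=
  if cfun x y == 1 then 0%N else 1%N.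

Definition m1pow (k : int) : int := if odd `|k|%N then -1 else 1.

Fixpoint pw (S : signed_group) (x : S) (k : nat) : S :=
  match k with 0%N => sg_one | k'.+1 => sg_mul (pw x k') x end.

Fixpoint eprodn (S : signed_group) (e : nat -> S) (k : nat -> nat) (N : nat) : S :=
  match N with
  | 0%N => sg_one
  | N'.+1 => sg_mul (eprodn e k N') (pw (e N') (k N'))
  end.

(* e^p for a 0-1 sequence p : nat -> bool, computed up to a bound N of its support *)
Definition eprod (S : signed_group) (e : nat -> S) (p : nat -> bool) (N : nat) : S :=
  eprodn e (fun n => nat_of_bool (p n)) N.

(* sequences of length L: L = None means countably infinite, L = Some m means
   indices 0..m-1 *)
Definition in_dom (L : option nat) (n : nat) : Prop :=
  match L with None => True | Some m => (n < m)%N end.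

Definition supp_bound (p : nat -> bool) (N : nat) : Prop :=
  forall n, (N <= n)%N -> p n = false.

Definition fin01 (L : option nat) (p : nat -> bool) : Prop :=
  (exists N, supp_bound p N) /\ (forall n, p n = true -> in_dom L n).

Definition basic (S : signed_group) (e : nat -> S) (L : option nat) : Prop :=
  forall (p : nat -> bool) (N : nat), fin01 L p -> supp_bound p N ->
    (exists n, p n = true) -> eprod e p N <> sg_one /\ eprod e p N <> sg_m1.

Definition anticommutative (S : signed_group) (e : nat -> S) (L : option nat) : Prop :=
  forall j k, in_dom L j -> in_dom L k -> j <> k ->
    sg_mul (e j) (e k) = sg_mul sg_m1 (sg_mul (e k) (e j)).

Definition positive_seq (S : signed_group) (e : nat -> S) (L : option nat) : Prop :=
  forall n, in_dom L n -> sg_mul (e n) (e n) = sg_one.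

Definition negative_seq (S : signed_group) (e : nat -> S) (L : option nat) : Prop :=
  forall n, in_dom L n -> sg_mul (e n) (e n) = sg_m1.

Inductive gen (S : signed_group) (g : nat -> S) (L : option nat) : S -> Prop :=
  | gen_one : gen g L sg_one
  | gen_g n : in_dom L n -> gen g L (g n)
  | gen_mul x y : gen g L x -> gen g L y -> gen g L (sg_mul x y)
  | gen_inv x : gen g L x -> gen g L (sg_inv x).

Definition len_ge2 (L : option nat) : Prop :=
  match L with None => True | Some m => (2 <= m)%N end.

Definition bq (n q : nat) : nat :=
  \sum_(j < n.+1 | (q + 4 * j <= n)%N) 'C(n, q + 4 * j).

Definition card_is (S : Type) (P : S -> Prop) (c : nat) : Prop :=
  exists l : list S, List.NoDup l /\ List.length l = c /\
    (forall x, List.In x l <-> P x).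

From mathcomp Require Import all_boot all_algebra.
From Stdlib Require Lists.List.
Import GRing.Theory Num.Theory.
From mathcomp Require Import ring zify.
From Stdlib Require Import ClassicalEpsilon.
Set Implicit Arguments. Unset Strict Implicit. Unset Printing Implicit Defensive.

(* Write x ~t y ([comm_sgn x y t]) for x y = (-1)^t y x; t is additive in each
   argument.  Hence e^p ~t e^q with t = sum_k p_k sum_j d_kj q_j, which gives (1),
   since c = 1 - 2d, and (2).  Merging e^p e^q into e^(p+q) moves each factor of
   e^q only past the factors of e^p of larger index, which gives the main formula.
   For anticommutative e every pair of factors of e^p contributes one sign to
   (e^p)^2 = (-1)^C(|p|,2) prod_n e_n^(2 p_n), and the parity of C(k,2) is
   periodic mod 4: this is (4), and counting subsets by size gives (5).
   As e^p e^q = +-e^(p xor q) and squares are +-1, basicness makes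
   (s, p) |-> (-1)^s e^p injective.  In (3) a third generator c would anticommute
   with a, b and ab, whereas anticommuting with a and b makes it commute with ab;
   with two generators, a b a^-1 b^-1 = -1 lies in G, so G = {+-e^p} has 2^3
   elements. *)

Local Notation "x · y" := (sg_mul x y) (at level 40, left associativity).
Local Notation m1 := sg_m1.

Lemma sum_triangle_recr (F : nat -> nat -> nat) N :
  \sum_(j < N.+1) \sum_(k < N.+1 | j < k) F j k =
  \sum_(j < N) \sum_(k < N | j < k) F j k + \sum_(j < N) F j N.
Proof.
rewrite big_ord_recr /= [X in _ + X]big_pred0 => [|k]; last by rewrite ltnNge -ltnS ltn_ord.
rewrite addn0 -big_split; apply: eq_bigr => j _.
by rewrite big_mkcond big_ord_recr /= -big_mkcond /= ltn_ord.
Qed.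

Section SignedGroupTheory.
Variable S : signed_group.
Implicit Types x y z : S.

Lemma sg_mulgI x : injective (sg_mul x).
Proof.
by move=> y z /(congr1 (sg_mul (sg_inv x))); rewrite !sg_mulA sg_mulVx !sg_mul1x.
Qed.

Lemma sg_mulIg x : injective (sg_mul^~ x).
Proof.
by move=> y z /(congr1 (sg_mul^~ (sg_inv x))); rewrite -!sg_mulA sg_mulxV !sg_mulx1.
Qed.

Definition sgn (n : nat) : S := pw m1 n.

Lemma sgnE n : sgn n = if odd n then m1 else sg_one.
Proof.
elim: n => [|n IH] //=; rewrite /sgn /= -/(sgn n) IH.
by case: (odd n); rewrite ?sg_m1_sq ?sg_mul1x.
Qed.

Lemma sgn1 : sgn 1 = m1.
Proof. exact: sg_mul1x. Qed.

Lemma sgnD a b : sgn (a + b) = sgn a · sgn b.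
Proof.
rewrite !sgnE oddD.
by case: (odd a); case: (odd b); rewrite /= ?sg_m1_sq ?sg_mul1x ?sg_mulx1.
Qed.

Lemma sgn_central a x : sgn a · x = x · sgn a.
Proof. by rewrite sgnE; case: (odd a); rewrite ?sg_m1_central ?sg_mul1x ?sg_mulx1. Qed.

Lemma sgn_odd a : sgn (odd a) = sgn a.
Proof. by rewrite !sgnE; case: (odd a). Qed.

Lemma sgn_inj a b : sgn a = sgn b -> odd a = odd b.
Proof.
by rewrite !sgnE; case: (odd a); case: (odd b) => //= h; case: (@sg_m1_neq1 S); rewrite h.
Qed.

Lemma sgn_eq_m1 a : sgn a = m1 <-> odd a.
Proof. by rewrite sgnE; case: (odd a); split => // /esym /sg_m1_neq1. Qed.

Lemma sgnK a x : sgn a · (sgn a · x) = x.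
Proof. by rewrite sg_mulA -sgnD sgnE oddD addbb sg_mul1x. Qed.

Lemma sqr_sgn x : exists u, x · x = sgn u.
Proof. by case: (sg_signature x) => ->; [exists 0 | exists 1; rewrite sgn1]. Qed.

Lemma invg_sgn x : exists u, sg_inv x = sgn u · x.
Proof.
have [u hu] := sqr_sgn x; exists u; apply: (@sg_mulgI x).
by rewrite sg_mulxV sg_mulA -sgn_central -sg_mulA hu -sgnD sgnE oddD addbb.
Qed.

Definition comm_sgn x y (t : nat) := x · y = sgn t · (y · x).

Lemma comm_sgn_dfun x y : comm_sgn x y (dfun x y).
Proof.
rewrite /comm_sgn /dfun /cfun; case: excluded_middle_informative => [eq|neq] /=.
  by rewrite sg_mul1x.
by case: (sg_comm_or_anti x y) => // ->; rewrite sgn1.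
Qed.

Lemma comm_sgn_sym x y t : comm_sgn x y t -> comm_sgn y x t.
Proof. by rewrite /comm_sgn => ->; rewrite sgnK. Qed.

Lemma comm_sgn_parity x y s t : comm_sgn x y s -> comm_sgn x y t -> odd s = odd t.
Proof. by rewrite /comm_sgn => -> /sg_mulIg /sgn_inj. Qed.

Lemma comm_sgn_mulr x y z a b : comm_sgn x y a -> comm_sgn x z b -> comm_sgn x (y · z) (a + b).
Proof.
rewrite /comm_sgn => ha hb.
by rewrite sg_mulA ha -!sg_mulA hb (sg_mulA y) -sgn_central -!sg_mulA sg_mulA -sgnD.
Qed.

Lemma comm_sgn_pwr x y a k : comm_sgn x y a -> comm_sgn x (pw y k) (a * k).
Proof.
move=> h; elim: k => [|k IH] /=; first by rewrite muln0 /comm_sgn /sgn /= !sg_mul1x sg_mulx1.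
by rewrite mulnS addnC; apply: comm_sgn_mulr.
Qed.

Lemma comm_sgn_pwl x y a k : comm_sgn x y a -> comm_sgn (pw x k) y (k * a).
Proof. by move=> h; rewrite mulnC; apply: comm_sgn_sym; apply: comm_sgn_pwr; apply: comm_sgn_sym. Qed.

Lemma comm_sgn_eprodnr (e : nat -> S) x (a k : nat -> nat) N :
  (forall j, comm_sgn x (e j) (a j)) -> comm_sgn x (eprodn e k N) (\sum_(j < N) a j * k j).
Proof.
move=> h; elim: N => [|N IH] /=; first by rewrite big_ord0 /comm_sgn /sgn /= !sg_mul1x sg_mulx1.
by rewrite big_ord_recr /=; apply: comm_sgn_mulr => //; apply: comm_sgn_pwr.
Qed.

Lemma comm_sgn_eprodnl (e : nat -> S) y (a k : nat -> nat) N :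
  (forall j, comm_sgn (e j) y (a j)) -> comm_sgn (eprodn e k N) y (\sum_(j < N) k j * a j).
Proof.
move=> h; apply: comm_sgn_sym.
under eq_bigr do rewrite mulnC.
by apply: comm_sgn_eprodnr => j; apply: comm_sgn_sym.
Qed.

Lemma cfun_comm_sgn x y t : comm_sgn x y t -> cfun x y = m1pow t.
Proof.
rewrite /comm_sgn /cfun /m1pow /= => h; case: excluded_middle_informative => c /=.
  have h0 : sgn 0 = sgn t by apply: (@sg_mulIg (y · x)); rewrite -h c sg_mul1x.
  by rewrite -(sgn_inj h0).
by move: h; rewrite sgnE; case: (odd t) => //; rewrite sg_mul1x.
Qed.

Lemma dfunC x y : dfun x y = dfun y x.
Proof.
rewrite /dfun /cfun.
by do 2 case: excluded_middle_informative => ? //; exfalso; auto.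
Qed.

Lemma dfun_xx x : dfun x x = 0.
Proof. by rewrite /dfun /cfun; case: excluded_middle_informative. Qed.

Lemma cfun_dfun x y : cfun x y = (1 - 2 * (dfun x y)%:Z)%R.
Proof. by rewrite /dfun /cfun; case: excluded_middle_informative. Qed.

Lemma pwD x m n : pw x m · pw x n = pw x (m + n).
Proof. by elim: n => [|n IH] /=; rewrite ?sg_mulx1 ?addn0 // addnS /= sg_mulA IH. Qed.

Lemma eq_eprodn (e : nat -> S) (k k' : nat -> nat) N :
  (forall n, n < N -> k n = k' n) -> eprodn e k N = eprodn e k' N.
Proof. by elim: N => [|N IH] //= h; rewrite IH ?h // => n /ltnW; apply: h. Qed.

Lemma eprod_false (e : nat -> S) N : eprod e (fun _ => false) N = sg_one.
Proof. by rewrite /eprod; elim: N => //= N ->; rewrite sg_mulx1. Qed.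

Lemma eprod_pred1 (e : nat -> S) k N :
  k < N -> eprod e (fun m => m == k) N = e k.
Proof.
elim: N => // N IH; rewrite ltnS leq_eqVlt => /orP [/eqP ->|kN]; rewrite /eprod /=.
  have -> : eprodn e (fun m => m == N) N = eprod e (fun _ => false) N.
    by apply: eq_eprodn => m mN; rewrite ltn_eqF.
  by rewrite eprod_false eqxx /= !sg_mul1x.
by rewrite -/(eprod e _ N) IH // (gtn_eqF kN) sg_mulx1.
Qed.

Lemma eprodn_mul (e : nat -> S) (k1 k2 : nat -> nat) N :
  eprodn e k1 N · eprodn e k2 N =
  sgn (\sum_(j < N) \sum_(k < N | j < k) dfun (e j) (e k) * k1 k * k2 j)
    · eprodn e (fun n => k1 n + k2 n) N.
Proof.
elim: N => [|N IH] /=; first by rewrite big_ord0 /sgn /= !sg_mul1x.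
set P := eprodn e k1 N; set Q := eprodn e k2 N.
set a := pw (e N) (k1 N); set b := pw (e N) (k2 N).
have aQ : comm_sgn a Q (\sum_(j < N) (k1 N * dfun (e N) (e j)) * k2 j).
  by apply: (comm_sgn_eprodnr (a := fun j => k1 N * dfun (e N) (e j))) => j;
     apply: comm_sgn_pwl; apply: comm_sgn_dfun.
have -> : P · a · (Q · b) = sgn (\sum_(j < N) (k1 N * dfun (e N) (e j)) * k2 j) · (P · Q) · (a · b).
  by rewrite -sg_mulA (sg_mulA a) aQ !sg_mulA -(sgn_central _ P).
rewrite IH -pwD (sum_triangle_recr (fun j k => dfun (e j) (e k) * k1 k * k2 j)).
rewrite addnC sgnD !sg_mulA; do 4 congr (_ · _); congr sgn.
by apply: eq_bigr => j _; rewrite dfunC (mulnC (k1 N)).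
Qed.

Lemma comm_sgn_eprodn (e : nat -> S) (p q : nat -> nat) N :
  comm_sgn (eprodn e p N) (eprodn e q N)
       (\sum_(k < N) p k * \sum_(j < N) dfun (e k) (e j) * q j).
Proof.
apply: (comm_sgn_eprodnl (a := fun k => \sum_(j < N) dfun (e k) (e j) * q j)) => k.
by apply: (comm_sgn_eprodnr (a := fun j => dfun (e k) (e j))) => j; apply: comm_sgn_dfun.
Qed.

Lemma pw_double (x : S) m : exists v, pw x (2 * m) = sgn v.
Proof.
elim: m => [|m [v IH]]; first by exists 0.
have [u hu] := sqr_sgn x.
by exists (v + u); rewrite mulnS -pwD IH /= sg_mul1x hu sgnD sgn_central.
Qed.

Lemma eprodn_mod2 (e : nat -> S) (k k' m : nat -> nat) N :
  (forall n, k n = k' n + 2 * m n) -> exists v, eprodn e k N = sgn v · eprodn e k' N.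
Proof.
move=> hk; elim: N => [|N [v IH]] /=; first by exists 0; rewrite sg_mul1x.
have [w hw] := pw_double (e N) (m N).
exists (v + w); rewrite IH hk -pwD hw.
by rewrite -(sgn_central w) !sg_mulA -(sgn_central w) sg_mulA -sgnD addnC.
Qed.

Lemma eprod_mul_addb (e : nat -> S) (p q : nat -> bool) N :
  exists u, eprod e p N · eprod e q N = sgn u · eprod e (fun n => p n (+) q n) N.
Proof.
have [w hw] : exists w, eprodn e (fun n => p n + q n) N =
                       sgn w · eprodn e (fun n => p n (+) q n) N.
  by apply: (@eprodn_mod2 e _ _ (fun n => p n && q n)) => n; case: (p n); case: (q n).
by eexists; rewrite /eprod eprodn_mul hw sg_mulA -sgnD.
Qed.

End SignedGroupTheory.

Arguments sgn {S} n.

Local Open Scope ring_scope.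

Lemma Posz_sum (I : Type) (r : seq I) (P : pred I) (F : I -> nat) :
  (\sum_(i <- r | P i) F i)%N%:Z = \sum_(i <- r | P i) (F i)%:Z.
Proof. exact: (big_morph Posz PoszD). Qed.

Lemma centered_form_one_sub_2d (c : nat -> nat -> int) (d : nat -> nat -> nat)
    (p q : nat -> nat) N :
  (forall j k, c j k = 1 - 2 * (d j k)%:Z) -> (forall j k, d j k = d k j) ->
  \sum_(j < N) (\sum_(k < N) c j k * (p k)%:Z) * (q j)%:Z
    - (\sum_(n < N) (p n)%:Z) * (\sum_(n < N) (q n)%:Z) =
   - (2 * (\sum_(k < N) p k * \sum_(j < N) d k j * q j)%N%:Z).
Proof.
move=> hc hd.
have -> : (\sum_(k < N) p k * \sum_(j < N) d k j * q j)%N%:Z =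
          \sum_(j < N) \sum_(k < N) (d j k)%:Z * (p k)%:Z * (q j)%:Z.
  rewrite Posz_sum exchange_big /=; apply: eq_bigr => k _.
  rewrite PoszM Posz_sum mulr_sumr; apply: eq_bigr => j _.
  by rewrite PoszM hd mulrCA mulrA.
have -> : (\sum_(n < N) (p n)%:Z) * (\sum_(n < N) (q n)%:Z) =
          \sum_(j < N) \sum_(k < N) (p k)%:Z * (q j)%:Z.
  rewrite mulrC mulr_suml; apply: eq_bigr => j _.
  by rewrite mulr_sumr; apply: eq_bigr => k _; rewrite mulrC.
rewrite -sumrB mulr_sumr -sumrN; apply: eq_bigr => j _.
rewrite mulr_suml -sumrB mulr_sumr -sumrN; apply: eq_bigr => k _.
by rewrite hc; ring.
Qed.

Lemma cfun_eprodn (S : signed_group) (e : nat -> S) (p q : nat -> nat) N :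
  cfun (eprodn e p N) (eprodn e q N) =
  m1pow ((\sum_(j < N) (\sum_(k < N) cfun (e j) (e k) * (p k)%:Z) * (q j)%:Z
          - (\sum_(n < N) (p n)%:Z) * (\sum_(n < N) (q n)%:Z)) %/ 2)%Z.
Proof.
rewrite (@centered_form_one_sub_2d (fun j k => cfun (e j) (e k))
                                  (fun j k => dfun (e j) (e k))) => [||j k].
- by rewrite (mulrC 2) -mulNr mulzK // /m1pow abszN -/(m1pow _) (cfun_comm_sgn (comm_sgn_eprodn _ _ _ _)).
- by move=> j k; rewrite cfun_dfun.
- exact: dfunC.
Qed.

Lemma dfun_anticomm (S : signed_group) (e : nat -> S) L j k :
  anticommutative e L -> in_dom L j -> in_dom L k -> j <> k -> dfun (e j) (e k) = 1%N.
Proof.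
move=> ha hj hk hjk; rewrite /dfun /cfun.
case: excluded_middle_informative => //= h; case: (@sg_m1_neq1 S).
by apply: (@sg_mulIg _ (e k · e j)); rewrite -ha // h sg_mul1x.
Qed.

Lemma sum_dfun_anticomm (S : signed_group) (e : nat -> S) L (p q : nat -> bool) N :
  anticommutative e L -> fin01 L p -> fin01 L q ->
  (\sum_(k < N) p k * \sum_(j < N) dfun (e k) (e j) * q j + \sum_(k < N) p k * q k
   = (\sum_(k < N) p k) * (\sum_(j < N) q j))%N.
Proof.
move=> ha [_ hp] [_ hq]; rewrite big_distrl -big_split /=; apply: eq_bigr => k _.
case hpk: (p k); rewrite ?mul0n // !mul1n (bigD1 k) //= [in RHS](bigD1 k) //=.
rewrite dfun_xx mul0n add0n addnC; congr (_ + _)%N; apply: eq_bigr => j hjk.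
case hqj: (q j); rewrite ?muln0 // (dfun_anticomm ha (hp k hpk) (hq j hqj)) //.
by move=> kj; move: hjk; rewrite -(inj_eq val_inj) /= kj eqxx.
Qed.

Lemma cfun_eprod_anticomm (S : signed_group) (e : nat -> S) L (p q : nat -> bool) N :
  anticommutative e L -> fin01 L p -> fin01 L q ->
  cfun (eprod e p N) (eprod e q N) =
  m1pow ((\sum_(n < N) (p n)%:Z) * (\sum_(n < N) (q n)%:Z)
         - \sum_(n < N) ((p n)%:Z * (q n)%:Z)).
Proof.
move=> ha hp hq; rewrite (cfun_comm_sgn (comm_sgn_eprodn _ _ _ _)).
have /(congr1 Posz) := sum_dfun_anticomm N ha hp hq.
rewrite PoszD PoszM !Posz_sum => <-; rewrite addrK.
by congr m1pow; apply: eq_bigr => n _; rewrite PoszM.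
Qed.

Local Close Scope ring_scope.

Lemma sum_pairs_bin2 (F : nat -> nat -> nat) (p : nat -> bool) N :
  (forall j k, j < k -> F j k = p j * p k) ->
  \sum_(j < N) \sum_(k < N | j < k) F j k = 'C(\sum_(n < N) p n, 2).
Proof.
move=> hF; elim: N => [|N IH]; first by rewrite !big_ord0.
rewrite sum_triangle_recr IH big_ord_recr /=.
have -> : \sum_(j < N) F j N = \sum_(j < N) p j * p N by apply: eq_bigr => j _; apply: hF.
rewrite -big_distrl /=; case: (p N); last by rewrite muln0 !addn0.
by rewrite muln1 addn1 binS bin1 addnC.
Qed.

Lemma odd_bin2 n : odd 'C(n, 2) = (n %% 4 == 2) || (n %% 4 == 3).
Proof.
elim: n => [|n IH] //; rewrite binS bin1 oddD IH.
have -> : odd n = odd (n %% 4) by rewrite {1}(divn_eq n 4) oddD oddM andbF.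
have -> : n.+1 %% 4 = (n %% 4).+1 %% 4 by rewrite -addn1 -[in RHS]addn1 modnDml.
by case: (n %% 4) (ltn_pmod n (isT : 0 < 4)) => [|[|[|[|r]]]].
Qed.

Lemma odd_bin2_addn n : odd ('C(n, 2) + n) = (n %% 4 == 1) || (n %% 4 == 2).
Proof.
have -> : 'C(n, 2) + n = 'C(n.+1, 2) by rewrite binS bin1.
rewrite odd_bin2.
have -> : n.+1 %% 4 = (n %% 4).+1 %% 4 by rewrite -addn1 -[in RHS]addn1 modnDml.
by case: (n %% 4) (ltn_pmod n (isT : 0 < 4)) => [|[|[|[|r]]]].
Qed.

Lemma eprodn_double (S : signed_group) (e : nat -> S) (p : nat -> bool) N u :
  (forall n, p n -> e n · e n = sgn u) ->
  eprodn e (fun n => 2 * p n) N = sgn (u * \sum_(n < N) p n).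
Proof.
move=> hu; elim: N => [|N IH] /=; first by rewrite big_ord0 muln0.
rewrite IH big_ord_recr /= mulnDr sgnD.
case hpN: (p N) => /=; last by rewrite muln0 sg_mulx1.
by rewrite sg_mul1x muln1 hu.
Qed.

Lemma eprod_sqr_anticomm (S : signed_group) (e : nat -> S) L (p : nat -> bool) N :
  anticommutative e L -> fin01 L p ->
  eprod e p N · eprod e p N =
  sgn 'C(\sum_(n < N) p n, 2) · eprodn e (fun n => 2 * p n) N.
Proof.
move=> ha [_ hp]; rewrite /eprod eprodn_mul.
rewrite (@eq_eprodn _ e _ (fun n => 2 * p n)) => [|n _]; last by rewrite mul2n addnn.
congr (sgn _ · _).
apply: (sum_pairs_bin2 (F := fun j k => dfun (e j) (e k) * p k * p j)) => j k jk.
case hj: (p j); case hk: (p k); rewrite /= ?muln0 //.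
by rewrite (dfun_anticomm ha (hp j hj) (hp k hk)) // => kj; rewrite kj ltnn in jk.
Qed.

Lemma eprod_sqr_anticomm_uniform (S : signed_group) (e : nat -> S) L (p : nat -> bool) N u :
  anticommutative e L -> fin01 L p -> (forall n, in_dom L n -> e n · e n = sgn u) ->
  eprod e p N · eprod e p N = sgn ('C(\sum_(n < N) p n, 2) + u * \sum_(n < N) p n).
Proof.
move=> ha hp hu; rewrite (eprod_sqr_anticomm _ ha hp) (@eprodn_double _ _ _ _ u) ?sgnD //.
by case: hp => _ hp n /hp; apply: hu.
Qed.

Lemma fin01_addb L (p q : nat -> bool) :
  fin01 L p -> fin01 L q -> fin01 L (fun n => p n (+) q n).
Proof.
move=> [[M hM] hp] [[N hN] hq]; split.
  by exists (maxn M N) => n; rewrite geq_max => /andP [/hM -> /hN ->].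
by move=> n; case hpn: (p n); case hqn: (q n) => //= _; [exact: hp | exact: hq].
Qed.

Lemma basic_eprod_sign_inj (S : signed_group) (e : nat -> S) L (p q : nat -> bool) N s t :
  basic e L -> fin01 L p -> fin01 L q -> supp_bound p N -> supp_bound q N ->
  sgn s · eprod e p N = sgn t · eprod e q N -> p =1 q /\ odd s = odd t.
Proof.
move=> hb hp hq hsp hsq heq.
have ep : eprod e p N = sgn (s + t) · eprod e q N.
  by rewrite -[eprod e p N](sgnK s) heq sg_mulA -sgnD.
have [v hv] : exists v, eprod e (fun n => p n (+) q n) N = sgn v.
  have [u uq] := sqr_sgn (eprod e q N).
  have [w hw] := eprod_mul_addb e p q N.
  exists (w + (s + t + u)).
  by rewrite -[LHS](sgnK w) -hw ep -sg_mulA uq -!sgnD.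
have pq : p =1 q.
  move=> n; apply/eqP/negPn/negP => pqn.
  have supp : supp_bound (fun n => p n (+) q n) N by move=> m hm; rewrite hsp ?hsq.
  have [] := hb _ N (fin01_addb hp hq) supp.
    by exists n; case: (p n) (q n) pqn => [] [].
  by rewrite hv sgnE; case: (odd v).
split=> //; apply/sgn_inj/(@sg_mulIg _ (eprod e q N)).
by rewrite -heq /eprod (@eq_eprodn _ e _ (fun n => q n)) // => n _; rewrite pq.
Qed.

Lemma In_map {T : Type} (U : eqType) (f : U -> T) (s : seq U) x :
  List.In x (map f s) <-> exists2 u, u \in s & f u = x.
Proof.
elim: s => [|a s IH] /=; first by split=> // [[]].
split.
- case=> [<-|/IH [u us <-]]; first by exists a; rewrite ?mem_head.
  by exists u; rewrite // in_cons us orbT.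
- case=> u; rewrite in_cons => /orP [/eqP -> <-|us ux]; first by left.
  by right; apply/IH; exists u.
Qed.

Lemma NoDup_map_in {T : Type} (U : eqType) (f : U -> T) (s : seq U) :
  uniq s -> {in s &, injective f} -> List.NoDup (map f s).
Proof.
elim: s => [|a s IH] /=; first by constructor.
move=> /andP [as_ us] inj; constructor.
  case/In_map => u su fua; move: as_; suff -> : a = u by rewrite su.
  by apply: inj; rewrite ?in_cons ?eqxx ?su ?orbT.
by apply: IH => // x y xs ys; apply: inj; rewrite in_cons ?xs ?ys orbT.
Qed.

Lemma card_is_image {T : Type} (U : finType) (A : {pred U}) (f : U -> T) (P : T -> Prop) :
  {in A &, injective f} -> (forall x, P x <-> exists2 u, u \in A & f u = x) ->
  card_is P #|A|.
Proof.
move=> inj hP; exists (map f (enum A)); split; last split.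
- by apply: NoDup_map_in; [exact: enum_uniq | by move=> x y; rewrite !mem_enum; apply: inj].
- by rewrite cardE; elim: (enum A) => //= a s ->.
- by move=> x; rewrite hP In_map; split=> -[u ua <-]; exists u; rewrite ?mem_enum in ua *.
Qed.

Definition indicator n (X : {set 'I_n}) (m : nat) : bool := m \in [seq val i | i <- enum X].

Lemma indicator_ord n (X : {set 'I_n}) (i : 'I_n) : indicator X i = (i \in X).
Proof. by rewrite /indicator mem_map ?mem_enum //; exact: val_inj. Qed.

Lemma supp_bound_indicator n (X : {set 'I_n}) : supp_bound (indicator X) n.
Proof. by move=> m nm; apply/mapP => -[i _ mi]; move: nm; rewrite mi leqNgt ltn_ord. Qed.

Lemma fin01_supp_bound n (p : nat -> bool) : supp_bound p n -> fin01 (Some n) p.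
Proof.
move=> hs; split; first by exists n.
by move=> m pm /=; rewrite ltnNge; apply/negP => /hs; rewrite pm.
Qed.

Lemma sum_indicator n (X : {set 'I_n}) : \sum_(m < n) indicator X m = #|X|.
Proof.
rewrite -sum1_card [in RHS]big_mkcond /=; apply: eq_bigr => i _.
by rewrite indicator_ord; case: (i \in X).
Qed.

Lemma eprod_indicator (S : signed_group) (e : nat -> S) n (p : nat -> bool) :
  eprod e (indicator [set i : 'I_n | p i]) n = eprod e p n.
Proof.
by apply: eq_eprodn => m mn; rewrite (indicator_ord _ (Ordinal mn)) inE.
Qed.

Lemma card_sets_card_in n (Q : pred nat) :
  #|[set X : {set 'I_n} | Q #|X|]| = \sum_(k < n.+1 | Q k) 'C(n, k).
Proof.
have cardX (X : {set 'I_n}) : #|X| < n.+1 by rewrite ltnS -[X in _ <= X](card_ord n) max_card.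
rewrite -sum1_card (partition_big (fun X : {set 'I_n} => inord #|X| : 'I_n.+1) (fun k : 'I_n.+1 => Q k)) /=;
  last by move=> X; rewrite inE inordK.
apply: eq_bigr => k Qk; rewrite -[X in 'C(X, _)](card_ord n) -card_draws -sum1_card.
apply: eq_bigl => X; rewrite !inE; apply/andP/eqP => [[_ /eqP <-]|kX].
  by rewrite inordK.
by rewrite kX Qk; split=> //; apply/eqP/val_inj; rewrite /= inordK.
Qed.

Lemma sum_mod4 (f : nat -> nat) q m : q < 4 ->
  \sum_(0 <= k < 4 * m | k %% 4 == q) f k = \sum_(j < m) f (q + 4 * j).
Proof.
move=> q4; elim: m => [|m IH]; first by rewrite big_ord0 muln0 big_geq.
rewrite big_ord_recr /= -IH mulnS addnC (@big_cat_nat _ _ _ (4 * m)) ?leq_addr //=.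
congr (_ + _); rewrite big_mkcond.
do 4 (rewrite big_ltn; last by lia).
rewrite big_geq; last by lia.
have [-> -> -> ->] : [/\ (4 * m) %% 4 = 0, (4 * m).+1 %% 4 = 1,
                       (4 * m).+2 %% 4 = 2 & (4 * m).+3 %% 4 = 3] by split; lia.
by clear IH; case: q q4 => [|[|[|[|q]]]] //= _; rewrite ?addn0.
Qed.

Lemma bq_sum_mod4 n q : q < 4 -> bq n q = \sum_(k < n.+1 | k %% 4 == q) 'C(n, k).
Proof.
move=> q4; have -> : bq n q = \sum_(j < n.+1) 'C(n, q + 4 * j).
  by rewrite /bq big_mkcond; apply: eq_bigr => j _; case: leqP => // /bin_small ->.
rewrite -sum_mod4 // (@big_cat_nat _ _ _ n.+1) //=; last by lia.
rewrite [X in _ + X]big1_seq ?addn0 ?big_mkord // => k /andP [_].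
by rewrite mem_index_iota => /andP [nk _]; apply: bin_small.
Qed.

Lemma sum_bin_odd_bin2 n :
  \sum_(k < n.+1 | odd 'C(k, 2)) 'C(n, k) = bq n 2 + bq n 3.
Proof.
rewrite !bq_sum_mod4 // big_mkcond [X in _ = X + _]big_mkcond [X in _ = _ + X]big_mkcond.
rewrite -big_split; apply: eq_bigr => k _ /=.
by rewrite odd_bin2; case: eqP => [->|_] /=; [rewrite addn0 | case: eqP].
Qed.

Lemma sum_bin_odd_bin2_addn n :
  \sum_(k < n.+1 | odd ('C(k, 2) + k)) 'C(n, k) = bq n 1 + bq n 2.
Proof.
rewrite !bq_sum_mod4 // big_mkcond [X in _ = X + _]big_mkcond [X in _ = _ + X]big_mkcond.
rewrite -big_split; apply: eq_bigr => k _ /=.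
by rewrite odd_bin2_addn; case: eqP => [->|_] /=; [rewrite addn0 | case: eqP].
Qed.

Lemma card_set_nat_pred n (p : nat -> bool) : #|[set i : 'I_n | p i]| = \sum_(m < n) p m.
Proof. by rewrite -sum1_card big_mkcond; apply: eq_bigr => i _; rewrite inE; case: (p i). Qed.

Lemma card_eprod_sqr_m1 (S : signed_group) (e : nat -> S) n (Q : pred nat) :
  basic e (Some n) ->
  (forall p, supp_bound p n -> (eprod e p n · eprod e p n = m1 <-> Q (\sum_(m < n) p m))) ->
  card_is (fun x => (exists p, supp_bound p n /\ eprod e p n = x) /\ x · x = m1)
          (\sum_(k < n.+1 | Q k) 'C(n, k)).
Proof.
move=> hb hQ; rewrite -card_sets_card_in.
apply: (@card_is_image _ _ _ (fun X : {set 'I_n} => eprod e (indicator X) n)).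
- move=> X Y _ _ XY; apply/setP => i; rewrite -!indicator_ord.
  have sX := supp_bound_indicator X; have sY := supp_bound_indicator Y.
  have [XY' _] := @basic_eprod_sign_inj _ _ _ _ _ n 0 0 hb (fin01_supp_bound sX)
                     (fin01_supp_bound sY) sX sY (congr1 _ XY).
  exact: XY'.
- move=> x; split.
  + move=> [[p [hs <-]] sq]; exists [set i : 'I_n | p i]; last exact: eprod_indicator.
    by rewrite inE card_set_nat_pred -hQ.
  + move=> [X]; rewrite inE => QX <-; split; first by exists (indicator X); split=> //; apply: supp_bound_indicator.
    by rewrite hQ ?sum_indicator //; apply: supp_bound_indicator.
Qed.

Lemma card_sqr_m1_anticomm (S : signed_group) (e : nat -> S) n u (Q : pred nat) :
  basic e (Some n) -> anticommutative e (Some n) -> (forall m, m < n -> e m · e m = sgn u) ->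
  (forall k, Q k = odd ('C(k, 2) + u * k)) ->
  card_is (fun x => (exists p, supp_bound p n /\ eprod e p n = x) /\ x · x = m1)
          (\sum_(k < n.+1 | Q k) 'C(n, k)).
Proof.
move=> hb ha hu hQ; apply: card_eprod_sqr_m1 => // p hs.
by rewrite (eprod_sqr_anticomm_uniform _ ha (fin01_supp_bound hs) hu) sgn_eq_m1 hQ.
Qed.

Lemma gen_eprod (S : signed_group) (g : nat -> S) L (p : nat -> bool) N :
  fin01 L p -> gen g L (eprod g p N).
Proof.
move=> [_ hp]; elim: N => [|N IH] /=; first exact: gen_one.
apply: gen_mul => //; case hpN: (p N) => /=; last exact: gen_one.
by apply: gen_mul; [exact: gen_one | exact/gen_g/hp].
Qed.

Lemma gen_sign_eprod (S : signed_group) (g : nat -> S) n x :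
  gen g (Some n) x -> exists (s : bool) (p : nat -> bool), supp_bound p n /\ x = sgn s · eprod g p n.
Proof.
elim=> {x} [|k kn|x y _ [s [p [hp ->]]] _ [t [q [hq ->]]]|x _ [s [p [hp ->]]]].
- by exists false, (fun _ => false); rewrite eprod_false sg_mul1x.
- exists false, (fun m => m == k); rewrite eprod_pred1 // sg_mul1x; split=> // m nm.
  exact: gtn_eqF (leq_trans kn nm).
- have [u hu] := eprod_mul_addb g p q n.
  exists (odd (s + t + u)), (fun m => p m (+) q m); split; first by move=> m nm; rewrite hp ?hq.
  by rewrite sgn_odd !sgnD -!sg_mulA -hu (sg_mulA (eprod g p n)) -sgn_central !sg_mulA.
- have [u hu] := invg_sgn (sgn s · eprod g p n).
  by exists (odd (u + s)), p; rewrite hu sgn_odd sgnD sg_mulA.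
Qed.

Lemma card_gen_basic (S : signed_group) (g : nat -> S) n :
  basic g (Some n) -> gen g (Some n) m1 -> card_is (gen g (Some n)) (2 ^ n.+1).
Proof.
move=> hb gm1.
have -> : 2 ^ n.+1 = #|{: bool * {set 'I_n}}|.
  by rewrite card_prod card_bool -cardsT -powersetT card_powerset cardsT card_ord expnS.
apply: (@card_is_image _ _ _ (fun u : bool * {set 'I_n} => sgn u.1 · eprod g (indicator u.2) n)).
- move=> [s X] [t Y] _ _ /=; have sX := supp_bound_indicator X; have sY := supp_bound_indicator Y.
  move/(basic_eprod_sign_inj hb (fin01_supp_bound sX) (fin01_supp_bound sY) sX sY) => [XY st].
  by congr pair; [case: s t st => [] [] | apply/setP => i; rewrite -!indicator_ord].
- move=> x; split.
  + case/gen_sign_eprod => s [p [_ ->]].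
    by exists (s, [set i : 'I_n | p i]); rewrite //= eprod_indicator.
  + case=> -[s X] _ <- /=; apply: gen_mul; last exact/gen_eprod/fin01_supp_bound/supp_bound_indicator.
    by case: s; [rewrite sgn1 | exact: gen_one].
Qed.

Lemma in_dom_le L k m : in_dom L k -> m <= k -> in_dom L m.
Proof. by case: L => //= n kn mk; apply: leq_ltn_trans kn. Qed.

Lemma in_dom_len_ge2 L : len_ge2 L -> in_dom L 1.
Proof. by case: L. Qed.

Lemma len_ge2_not_in_dom2 L : len_ge2 L -> ~ in_dom L 2 -> L = Some 2.
Proof. by case: L => //= n n2 /negP; rewrite -leqNgt => n2'; congr Some; apply/eqP; rewrite eqn_leq n2 n2'. Qed.

Lemma fin01_pred1 L k : in_dom L k -> fin01 L (fun m => m == k).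
Proof.
move=> hk; split; first by exists k.+1 => m km; apply: gtn_eqF.
by move=> m /eqP ->.
Qed.

Lemma fin01_leq L k : in_dom L k -> fin01 L (fun m => m <= k).
Proof.
move=> hk; split; first by exists k.+1 => m km; rewrite leqNgt km.
by move=> m; apply: in_dom_le.
Qed.

Section AnticommutingGenerators.
Variables (S : signed_group) (L : option nat) (g : nat -> S).
Hypothesis g_basic : basic g L.
Hypothesis g_anticomm : forall x y, gen g L x -> gen g L y ->
  x <> sg_one -> x <> m1 -> y <> sg_one -> y <> m1 -> x <> y -> x <> m1 · y ->
  x · y = m1 · (y · x).

Lemma comm_sgn_eprod_distinct (p q : nat -> bool) N :
  fin01 L p -> fin01 L q -> supp_bound p N -> supp_bound q N ->
  (exists n, p n) -> (exists n, q n) -> ~ (p =1 q) -> comm_sgn (eprod g p N) (eprod g q N) 1.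
Proof.
move=> hp hq sp sq p0 q0 pq.
have [p1 pm1] := g_basic hp sp p0; have [q1 qm1] := g_basic hq sq q0.
rewrite /comm_sgn sgn1; apply: g_anticomm => //; try exact: gen_eprod.
- move=> epq; apply: pq.
  by have [] := basic_eprod_sign_inj g_basic hp hq sp sq (congr1 (sg_mul (sgn 0)) epq).
- move=> epq; apply: pq; have e01 : sgn 0 · eprod g p N = sgn 1 · eprod g q N.
    by rewrite sgn1 -epq sg_mul1x.
  by have [] := basic_eprod_sign_inj g_basic hp hq sp sq e01.
Qed.

Lemma comm_sgn_gen_distinct k l :
  in_dom L k -> in_dom L l -> k != l -> comm_sgn (g k) (g l) 1.
Proof.
move=> hk hl kl; have kN : k < (maxn k l).+1 by rewrite ltnS leq_maxl.
have lN : l < (maxn k l).+1 by rewrite ltnS leq_maxr.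
rewrite -(eprod_pred1 g kN) -(eprod_pred1 g lN).
apply: comm_sgn_eprod_distinct; try exact: fin01_pred1.
- by move=> m km; apply: gtn_eqF; apply: leq_trans km.
- by move=> m lm; apply: gtn_eqF; apply: leq_trans lm.
- by exists k.
- by exists l.
- by move/(_ k); rewrite eqxx (negbTE kl).
Qed.

Lemma anticomm_gen_not_in_dom2 : in_dom L 1 -> ~ in_dom L 2.
Proof.
move=> h1 h2; have h0 := in_dom_le h1 (leq0n 1).
have c_ab : comm_sgn (g 2) (g 0 · g 1) 1.
  have -> : g 0 · g 1 = eprod g (fun m => m <= 1) 3 by rewrite /eprod /= !sg_mul1x sg_mulx1.
  rewrite -(eprod_pred1 g (ltnSn 2)).
  apply: comm_sgn_eprod_distinct; [exact: fin01_pred1 | exact: fin01_leq | | | | | ].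
  - by move=> m m3; apply: gtn_eqF; apply: leq_trans m3.
  - by move=> m m3; apply/negbTE; rewrite -ltnNge ltnW.
  - by exists 2.
  - by exists 0.
  - by move/(_ 2).
have := comm_sgn_mulr (comm_sgn_gen_distinct h2 h0 isT) (comm_sgn_gen_distinct h2 h1 isT).
by move/(comm_sgn_parity c_ab).
Qed.

Lemma anticomm_gen_m1 : in_dom L 1 -> gen g L m1.
Proof.
move=> h1; have h0 := in_dom_le h1 (leq0n 1).
have -> : m1 = g 0 · g 1 · (sg_inv (g 0) · sg_inv (g 1)).
  rewrite (comm_sgn_gen_distinct h0 h1 isT) sgn1 -!sg_mulA (sg_mulA (g 0)) sg_mulxV.
  by rewrite sg_mul1x sg_mulxV sg_mulx1.
by do 2 apply: gen_mul; try apply: gen_inv; apply: gen_g.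
Qed.

End AnticommutingGenerators.

Local Open Scope ring_scope.

Theorem lemma3p1 (S : signed_group) (L : option nat) (e : nat -> S)
  (he : basic e L) :
  (* main formula: e^p e^q = (-1)^{sum_j sum_{k>j} d_jk p_k q_j} e^{p+q} *)
  (forall (p q : nat -> bool) (N : nat),
     fin01 L p -> fin01 L q -> supp_bound p N -> supp_bound q N ->
     sg_mul (eprod e p N) (eprod e q N) =
     sg_mul (pw sg_m1 (\sum_(j < N) \sum_(k < N | (j < k)%N)
                         (dfun (e j) (e k) * p k * q j)%N)%N)
            (eprodn e (fun n => (p n + q n)%N) N)) /\
  (* (1) *)
  (forall (p q : nat -> bool) (N : nat),
     fin01 L p -> fin01 L q -> supp_bound p N -> supp_bound q N ->
     cfun (eprod e p N) (eprod e q N) =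
     m1pow (((\sum_(j < N) (\sum_(k < N) cfun (e j) (e k) * (p k)%:Z) * (q j)%:Z)
             - (\sum_(n < N) (p n)%:Z) * (\sum_(n < N) (q n)%:Z)) %/ 2)%Z) /\
  (* (2) *)
  (anticommutative e L ->
   forall (p q : nat -> bool) (N : nat),
     fin01 L p -> fin01 L q -> supp_bound p N -> supp_bound q N ->
     cfun (eprod e p N) (eprod e q N) =
     m1pow ((\sum_(n < N) (p n)%:Z) * (\sum_(n < N) (q n)%:Z)
            - \sum_(n < N) ((p n)%:Z * (q n)%:Z))) /\
  (* (3) *)
  (forall (L' : option nat) (g : nat -> S),
     basic g L' -> len_ge2 L' ->
     (forall x y, gen g L' x -> gen g L' y ->
        x <> sg_one -> x <> sg_m1 -> y <> sg_one -> y <> sg_m1 ->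
        x <> y -> x <> sg_mul sg_m1 y ->
        sg_mul x y = sg_mul sg_m1 (sg_mul y x)) ->
     L' = Some 2%N /\ card_is (gen g L') 8) /\
  (* (4) *)
  (anticommutative e L ->
   forall (p : nat -> bool) (N : nat),
     fin01 L p -> supp_bound p N ->
     let pp := (\sum_(n < N) p n)%N in
     sg_mul (eprod e p N) (eprod e p N) =
       sg_mul (eprodn e (fun n => (2 * p n)%N) N) (pw sg_m1 (pp * (pp - 1) %/ 2)%N) /\
     (positive_seq e L ->
        (sg_mul (eprod e p N) (eprod e p N) = sg_m1 <->
         (pp %% 4 = 2 \/ pp %% 4 = 3)%N)) /\
     (negative_seq e L ->
        (sg_mul (eprod e p N) (eprod e p N) = sg_m1 <->
         (pp %% 4 = 2 \/ pp %% 4 = 1)%N))) /\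
  (* (5) *)
  (forall n : nat, L = Some n -> anticommutative e L ->
     let negs := fun x : S =>
       (exists p : nat -> bool, supp_bound p n /\ eprod e p n = x) /\
       sg_mul x x = sg_m1 in
     (positive_seq e L -> card_is negs (bq n 2 + bq n 3)%N) /\
     (negative_seq e L -> card_is negs (bq n 1 + bq n 2)%N)).
Proof.
split; first by move=> p q N *; apply: eprodn_mul.
split; first by move=> p q N *; apply: cfun_eprodn.
split; first by move=> ha p q N hp hq _ _; exact: cfun_eprod_anticomm N ha hp hq.
split.
  move=> L' g hb hl ha; have h1 := in_dom_len_ge2 hl.
  have L2 := len_ge2_not_in_dom2 hl (anticomm_gen_not_in_dom2 hb ha h1); subst L'.
  by split=> //; exact: card_gen_basic hb (anticomm_gen_m1 hb ha h1).
split.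
  move=> ha p N hp _ pp; split.
    by rewrite (eprod_sqr_anticomm _ ha hp) sgn_central bin2 -divn2 subn1.
  split=> hsg.
  - rewrite (@eprod_sqr_anticomm_uniform _ _ _ _ _ 0 ha hp hsg) mul0n addn0 sgn_eq_m1 odd_bin2.
    by split=> [/orP[]/eqP|[]->]; auto.
  - rewrite (@eprod_sqr_anticomm_uniform _ _ _ _ _ 1 ha hp) => [|m /hsg ->]; last by rewrite sgn1.
    rewrite mul1n sgn_eq_m1 odd_bin2_addn.
    by split=> [/orP[]/eqP|[]->]; auto.
move=> n Ln ha; rewrite Ln in he ha *; split=> hsg.
- rewrite -sum_bin_odd_bin2; apply: (@card_sqr_m1_anticomm _ _ _ 0 (fun k => odd 'C(k, 2))) => // k.
  by rewrite mul0n addn0.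
- rewrite -sum_bin_odd_bin2_addn; apply: (@card_sqr_m1_anticomm _ _ _ 1 (fun k => odd ('C(k, 2) + k))) => // [m /hsg ->|k].
    by rewrite sgn1.
  by rewrite mul1n.
Qed.
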